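(* Let $Y$ be a real Hilbert space, let $T\colon Y\to Y$ be a bounded linear operator that is bijective, let $\lambda>0$, and suppose that $\langle x, Tx\rangle+\lambda\|Tx\|^2\le 0$ for all $x\in Y$. Then for every maximally monotone multifunction $M\colon Y\rightrightarrows Y$, the multifunction $MT$ (given by $y\mapsto M(Ty)$) has a unique fixed point, i.e. there is exactly one $y\in Y$ with $y\in M(Ty)$. *)

From HB Require Import structures.
From mathcomp Require Import all_boot all_order all_algebra.
From mathcomp Require Import all_classical all_reals all_analysis.
Set Implicit Arguments. Unset Strict Implicit. Unset Printing Implicit Defensive.
Import Order.TTheory GRing.Theory Num.Theory.
Import numFieldNormedType.Exports.
Local Open Scope classical_set_scope.
Local Open Scope ring_scope.

(* ip is a (real) inner product on Y whose induced norm is the norm of Y.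
   Together with Y : completeNormedModType R this makes Y a real Hilbert space. *)
Definition is_inner_product (R : realType) (Y : normedModType R)
  (ip : Y -> Y -> R) : Prop :=
  [/\ (forall x y, ip x y = ip y x),
      (forall (a : R) (x y z : Y), ip (a *: x + y) z = a * ip x z + ip y z)
    & (forall x, ip x x = `|x| ^+ 2)].

Definition bounded_linear (R : realType) (Y : normedModType R) (T : Y -> Y) : Prop :=
  (forall (a : R) (x y : Y), T (a *: x + y) = a *: T x + T y) /\ continuous T.

Definition monotone_mf (R : realType) (Y : normedModType R)
  (ip : Y -> Y -> R) (M : Y -> set Y) : Prop :=
  forall x y u v, M x u -> M y v -> 0 <= ip (x - y) (u - v).

Definition maximally_monotone (R : realType) (Y : normedModType R)
  (ip : Y -> Y -> R) (M : Y -> set Y) : Prop :=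
  monotone_mf ip M /\
  forall M' : Y -> set Y, monotone_mf ip M' ->
    (forall x, M x `<=` M' x) -> forall x, M' x = M x.

From HB Require Import structures.
From mathcomp Require Import all_boot all_order all_algebra.
From mathcomp Require Import all_classical all_reals all_analysis.
From mathcomp Require Import lra ring.
Import Order.TTheory GRing.Theory Num.Theory.
Import numFieldNormedType.Exports.
Local Open Scope classical_set_scope.
Local Open Scope ring_scope.
Set Implicit Arguments. Unset Strict Implicit. Unset Printing Implicit Defensive.

(* Put S := T^-1.  The hypothesis reads <S h, h> <= - lambda |h|^2, and y is a fixed
   point of M T exactly when x := T y satisfies S x \in M x.
   A dissipative linear map defined on a whole Hilbert space is bounded: the functionals
   x |-> <S y, x> / (1 - <S y, y>), |y| <= 1, are pointwise bounded, so Banach-Steinhaus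
   applies.  For a Lipschitz constant L of S and g := lambda / L^2 the map h |-> h + g S h
   is a contraction, hence so is its composite with the nonexpansive resolvent
   (I + g M)^-1, and the fixed point x of the composite satisfies S x \in M x.
   The resolvent is defined everywhere by Minty's theorem, which is obtained as follows:
   for a monotone graph G, the points (d, p) = ((x - u) / 2, <x, u>), (x, u) in G, and
   their convex combinations satisfy |d|^2 + p >= 0; a minimizing sequence of |d|^2 + p
   is Cauchy by the parallelogram law, and its limit z satisfies <z - x, -z - u> >= 0
   for all (x, u) in G, so that (z, -z) lies in the graph of a maximal extension of G.
   Uniqueness follows from the monotonicity of M and <h, T h> <= - lambda |T h|^2. *)

Section InnerProduct.
Variables (R : realType) (Y : normedModType R) (ip : Y -> Y -> R).
Hypothesis ipP : is_inner_product ip.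

Lemma ipC x y : ip x y = ip y x.
Proof. by case: ipP. Qed.

Lemma ipxx x : ip x x = `|x| ^+ 2.
Proof. by case: ipP. Qed.

Lemma ip0l z : ip 0 z = 0.
Proof.
case: ipP => _ ipZD _; have := ipZD 1 0 0 z.
by rewrite scaler0 addr0 mul1r; lra.
Qed.

Lemma ipDl x y z : ip (x + y) z = ip x z + ip y z.
Proof. by case: ipP => _ ipZD _; rewrite -[x in LHS]scale1r ipZD mul1r. Qed.

Lemma ipZl a x z : ip (a *: x) z = a * ip x z.
Proof. by case: ipP => _ ipZD _; rewrite -[a *: x]addr0 ipZD ip0l addr0. Qed.

Lemma ipNl x z : ip (- x) z = - ip x z.
Proof. by rewrite -scaleN1r ipZl mulN1r. Qed.

Lemma ipBl x y z : ip (x - y) z = ip x z - ip y z.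
Proof. by rewrite ipDl ipNl. Qed.

Lemma ipDr x y z : ip z (x + y) = ip z x + ip z y.
Proof. by rewrite ipC ipDl !(ipC z). Qed.

Lemma ipZr a x z : ip z (a *: x) = a * ip z x.
Proof. by rewrite ipC ipZl ipC. Qed.

Lemma ipNr x z : ip z (- x) = - ip z x.
Proof. by rewrite ipC ipNl ipC. Qed.

Lemma ipBr x y z : ip z (x - y) = ip z x - ip z y.
Proof. by rewrite ipDr ipNr. Qed.

Lemma ip0r z : ip z 0 = 0.
Proof. by rewrite ipC ip0l. Qed.

Definition ipE := (ipDl, ipBl, ipNl, ipZl, ip0l, ipDr, ipBr, ipNr, ipZr, ip0r).

Lemma cauchy_schwarz x y : `|ip x y| <= `|x| * `|y|.
Proof.
have [->|x0] := eqVneq x 0; first by rewrite ip0l !normr0 mul0r.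
have [->|y0] := eqVneq y 0; first by rewrite ip0r !normr0 mulr0.
have nxy : 0 < `|x| * `|y| by rewrite mulr_gt0 ?normr_gt0.
have := sqr_ge0 `| `|y| *: x - `|x| *: y|; have := sqr_ge0 `| `|y| *: x + `|x| *: y|.
rewrite -!ipxx !ipE !ipxx (ipC y x) ler_norml => Hm Hp.
by apply/andP; split; rewrite -(ler_pM2l nxy); nra.
Qed.

Lemma sqr_norm_convex_comb (a b : Y) (t : R) : `|(1 - t) *: a + t *: b| ^+ 2 =
  (1 - t) * `|a| ^+ 2 + t * `|b| ^+ 2 - t * (1 - t) * `|a - b| ^+ 2.
Proof. by rewrite -!ipxx !ipE (ipC b a); ring. Qed.

End InnerProduct.

Lemma cvgn_sqr_dist_le (R : realType) (V : completeNormedModType R)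
    (u : nat -> V) (e : nat -> R) :
  e @ \oo --> 0 -> (forall n m, `|u n - u m| ^+ 2 <= e n + e m) -> cvgn u.
Proof.
move=> e0 ue; apply/cauchy_cvgP/cauchy_ballP => _ /posnumP[eps].
rewrite near_map2 -ball_normE /=.
have small_e : \forall k \near \oo, e k < eps%:num ^+ 2 / 2 by apply: cvgr_lt e0 _ _.
near=> n m; rewrite -(@ltr_pXn2r _ 2) ?nnegrE //.
apply: le_lt_trans (ue n m) _.
rewrite [X in _ < X](splitr (eps%:num ^+ 2)) ltrD //; [near: n | near: m]; exact: small_e.
Unshelve. all: by end_near. Qed.

Section ConvexAboveParaboloid.
Variables (R : realType) (Y : completeNormedModType R) (ip : Y -> Y -> R).
Hypothesis ipP : is_inner_product ip.
Variable D : Y -> R -> Prop.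
Hypothesis D_convex : forall d1 p1 d2 p2 t, 0 <= t -> t <= 1 -> D d1 p1 -> D d2 p2 ->
  D ((1 - t) *: d1 + t *: d2) ((1 - t) * p1 + t * p2).

Lemma sqr_norm_add_convex_comb (d1 d2 : Y) (p1 p2 t : R) :
  `|(1 - t) *: d1 + t *: d2| ^+ 2 + ((1 - t) * p1 + t * p2) =
  (1 - t) * (`|d1| ^+ 2 + p1) + t * (`|d2| ^+ 2 + p2) - t * (1 - t) * `|d1 - d2| ^+ 2.
Proof. by rewrite (sqr_norm_convex_comb ipP); ring. Qed.

Section MinimizingSequence.
Variables (m : R) (c : nat -> Y * R).
Hypothesis m_lb : forall d p, D d p -> m <= `|d| ^+ 2 + p.
Hypothesis c_in : forall n, D (c n).1 (c n).2.
Hypothesis c_min : forall n, `|(c n).1| ^+ 2 + (c n).2 <= m + harmonic n.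

Lemma minimizing_sqr_dist n k :
  `|(c n).1 - (c k).1| ^+ 2 <= 2 * harmonic n + 2 * harmonic k.
Proof.
have half0 : (0 : R) <= 2^-1 by [].
have half1 : (2^-1 : R) <= 1 by rewrite invf_le1 ?ler1n.
have := m_lb (D_convex half0 half1 (c_in n) (c_in k)).
rewrite sqr_norm_add_convex_comb; have := c_min n; have := c_min k; lra.
Qed.

Lemma minimizing_cvg : cvgn (fun n => (c n).1).
Proof.
apply: (@cvgn_sqr_dist_le _ _ _ (fun n => 2 * harmonic n)) minimizing_sqr_dist.
by rewrite -[0 : R](mulr0 2); apply: cvgM; [exact: cvg_cst | exact: cvg_harmonic].
Qed.

Local Notation z := (lim ((c n).1 @[n --> \oo])).

Lemma minimizing_lim_tangent d p : D d p -> `|z - d| ^+ 2 + m <= `|d| ^+ 2 + p.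
Proof.
move=> Ddp.
have c_cvg := minimizing_cvg.
have dist_cvg : `|(c n).1 - d| ^+ 2 @[n --> \oo] --> `|z - d| ^+ 2.
  by apply: cvgM; apply: cvg_norm; apply: cvgB => //; exact: cvg_cst.
have comb_bound t n : 0 < t -> t <= 1 ->
    (1 - t) * `|(c n).1 - d| ^+ 2 - harmonic n / t <= `|d| ^+ 2 + p - m.
  move=> t0 t1; rewrite -(ler_pM2l t0) mulrBr [t * (_ / t)]mulrCA mulfV ?gt_eqF // mulr1.
  have := m_lb (D_convex (ltW t0) t1 (c_in n) Ddp).
  rewrite sqr_norm_add_convex_comb.
  have h0 : 0 <= t * harmonic n by rewrite mulr_ge0 ?(ltW t0) ?harmonic_ge0.
  have t1c : 0 <= 1 - t by rewrite subr_ge0.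
  have := ler_wpM2l t1c (c_min n).
  lra.
have lim_comb_bound t : 0 < t -> t <= 1 -> (1 - t) * `|z - d| ^+ 2 <= `|d| ^+ 2 + p - m.
  move=> t0 t1.
  apply: (@cvgr_to_le _ \oo _ _ (fun n => (1 - t) * `|(c n).1 - d| ^+ 2 - harmonic n / t)).
    have -> : (1 - t) * `|z - d| ^+ 2 = (1 - t) * `|z - d| ^+ 2 - 0 / t.
      by rewrite mul0r subr0.
    by apply: cvgB; apply: cvgM => //; [exact: cvg_cst | exact: cvg_harmonic | exact: cvg_cst].
  by apply: nearW => n; exact: comb_bound.
suff : `|z - d| ^+ 2 <= `|d| ^+ 2 + p - m by lra.
apply: (@cvgr_to_le _ \oo _ _ (fun k => (1 - harmonic k) * `|z - d| ^+ 2)).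
  rewrite -[X in _ --> X]mul1r -[X in X * _]subr0.
  by apply: cvgM; [apply: cvgB; [exact: cvg_cst | exact: cvg_harmonic] | exact: cvg_cst].
by apply: nearW => k; apply: lim_comb_bound; rewrite /= ?invr_gt0 ?invf_le1 ?ler1n.
Qed.

End MinimizingSequence.

Hypothesis D_above : forall d p, D d p -> 0 <= `|d| ^+ 2 + p.

(* |z - d|^2 - |d|^2 = |z|^2 - 2 <z, d> is the tangent at z of the concave map - |d|^2. *)
Lemma convex_above_paraboloid_tangent :
  exists z, forall d p, D d p -> `|z - d| ^+ 2 <= `|d| ^+ 2 + p.
Proof.
have [[d0 [p0 Dd0]]|D0] := pselect (exists d p, D d p); last first.
  by exists 0 => d p Ddp; exfalso; apply: D0; exists d, p.
pose E := [set `|x.1| ^+ 2 + x.2 | x in [set x : Y * R | D x.1 x.2]].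
have E_lb : lbound E 0 by move=> _ [x Dx <-]; exact: D_above.
have E0 : E !=set0 by exists (`|d0| ^+ 2 + p0), (d0, p0).
have m_lb d p : D d p -> inf E <= `|d| ^+ 2 + p.
  by move=> Ddp; apply: ge_inf; [exists 0 | exists (d, p)].
have /choice[c c_spec] : forall n, exists x : Y * R,
    D x.1 x.2 /\ `|x.1| ^+ 2 + x.2 <= inf E + harmonic n.
  move=> n.
  have E_inf : has_inf E by split; last exists 0.
  have [_ [x Dx <-] lt] := inf_adherent (harmonic_gt0 n) E_inf.
  by exists x; split => //; exact: ltW.
exists (lim ((c n).1 @[n --> \oo])) => d p Ddp.
have := minimizing_lim_tangent m_lb (fun n => (c_spec n).1) (fun n => (c_spec n).2) Ddp.
have := lb_le_inf E0 E_lb.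
lra.
Qed.

End ConvexAboveParaboloid.

Section MonotoneHull.
Variables (R : realType) (Y : completeNormedModType R) (ip : Y -> Y -> R).
Hypothesis ipP : is_inner_product ip.
Variable G : Y -> set Y.
Hypothesis G_mono : monotone_mf ip G.

Inductive lifted_hull : Y -> Y -> R -> Prop :=
| lifted_hull_graph x u : G x u -> lifted_hull x u (ip x u)
| lifted_hull_comb X1 U1 p1 X2 U2 p2 t : 0 <= t -> t <= 1 ->
    lifted_hull X1 U1 p1 -> lifted_hull X2 U2 p2 ->
    lifted_hull ((1 - t) *: X1 + t *: X2) ((1 - t) *: U1 + t *: U2)
      ((1 - t) * p1 + t * p2).

Let ipE := ipE ipP.

Lemma lifted_hull_graph_cross x u X U p : G x u -> lifted_hull X U p ->
  ip x U + ip X u <= ip x u + p.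
Proof.
move=> Gxu; elim=> [x' u' Gxu' | X1 U1 p1 X2 U2 p2 t t0 t1 _ IH1 _ IH2].
  by have := G_mono Gxu Gxu'; rewrite !ipE (ipC ipP x' u); lra.
by rewrite !ipE; nra.
Qed.

Lemma lifted_hull_cross X1 U1 p1 X2 U2 p2 :
  lifted_hull X1 U1 p1 -> lifted_hull X2 U2 p2 -> ip X1 U2 + ip X2 U1 <= p1 + p2.
Proof.
move=> h; elim: h X2 U2 p2 => [x u Gxu | X1' U1' p1' X2' U2' p2' t t0 t1 _ IH1 _ IH2]
  X2 U2 p2 h2; first exact: lifted_hull_graph_cross.
by have := IH1 _ _ _ h2; have := IH2 _ _ _ h2; rewrite !ipE; nra.
Qed.

Lemma monotone_opp_related : exists z, forall x u, G x u -> 0 <= ip (z - x) (- z - u).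
Proof.
pose D d p := exists X U, lifted_hull X U p /\ d = 2^-1 *: (X - U).
have D_convex d1 p1 d2 p2 t : 0 <= t -> t <= 1 -> D d1 p1 -> D d2 p2 ->
    D ((1 - t) *: d1 + t *: d2) ((1 - t) * p1 + t * p2).
  move=> t0 t1 [X1 [U1 [h1 ->]]] [X2 [U2 [h2 ->]]].
  exists ((1 - t) *: X1 + t *: X2), ((1 - t) *: U1 + t *: U2).
  split; first exact: lifted_hull_comb.
  by rewrite !scalerBr !scalerDr !scalerA !(mulrC 2^-1) opprD addrACA.
have D_above d p : D d p -> 0 <= `|d| ^+ 2 + p.
  move=> [X [U [h ->]]]; have := lifted_hull_cross h h.
  have := sqr_ge0 `|X + U|; rewrite -!(ipxx ipP) !ipE (ipC ipP U X); lra.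
have [z z_tangent] := convex_above_paraboloid_tangent ipP D_convex D_above.
exists z => x u Gxu.
have /z_tangent : D (2^-1 *: (x - u)) (ip x u).
  by exists x, u; split => //; exact: lifted_hull_graph.
by rewrite -!(ipxx ipP) !ipE (ipC ipP u x) (ipC ipP x z) (ipC ipP u z); lra.
Qed.

End MonotoneHull.

Section MonotoneOperators.
Variables (R : realType) (Y : normedModType R) (ip : Y -> Y -> R).
Hypothesis ipP : is_inner_product ip.
Variable M : Y -> set Y.

Lemma maximally_monotone_related z w : maximally_monotone ip M ->
  (forall x v, M x v -> 0 <= ip (z - x) (w - v)) -> M z w.
Proof.
move=> [M_mono M_max] zw_rel.
pose M' x := M x `|` [set v | x = z /\ v = w].
have M'_mono : monotone_mf ip M'.
  move=> x1 x2 u1 u2 [Mxu1|[-> ->]] [Mxu2|[-> ->]].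
  - exact: M_mono.
  - by rewrite -opprB -(opprB w) (ipNl ipP) (ipNr ipP) opprK; exact: zw_rel.
  - exact: zw_rel.
  - by rewrite !subrr (ip0l ipP).
by rewrite -(M_max M' M'_mono (fun x v => @or_introl _ _)); right.
Qed.

Lemma resolvent_nonexpansive g b1 b2 z1 z2 : monotone_mf ip M -> 0 < g ->
  M z1 (g^-1 *: (b1 - z1)) -> M z2 (g^-1 *: (b2 - z2)) -> `|z1 - z2| <= `|b1 - b2|.
Proof.
move=> M_mono g0 M1 M2; have := M_mono _ _ _ _ M1 M2.
rewrite -scalerBr (ipZr ipP) pmulr_rge0 ?invr_gt0 //.
have -> : b1 - z1 - (b2 - z2) = b1 - b2 - (z1 - z2).
  by rewrite opprB opprB addrACA [RHS]addrACA [- b2 + _]addrC.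
rewrite (ipBr ipP) (ipxx ipP) subr_ge0 => le_ip.
have := le_trans le_ip (le_trans (ler_norm _) (cauchy_schwarz ipP _ _)).
have := normr_ge0 (z1 - z2); have := normr_ge0 (b1 - b2); nra.
Qed.

End MonotoneOperators.

Section Minty.
Variables (R : realType) (Y : completeNormedModType R) (ip : Y -> Y -> R).
Hypothesis ipP : is_inner_product ip.
Variable M : Y -> set Y.
Hypothesis M_max : maximally_monotone ip M.

Lemma resolvent_exists g b : 0 < g -> exists z, M z (g^-1 *: (b - z)).
Proof.
move=> g0.
pose G x u := exists2 v, M x v & u = g *: v - b.
have G_mono : monotone_mf ip G.
  move=> x1 x2 _ _ [v1 M1 ->] [v2 M2 ->].
  rewrite opprB addrA subrK -scalerBr (ipZr ipP).
  exact: mulr_ge0 (ltW g0) (M_max.1 _ _ _ _ M1 M2).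
have [z z_rel] := monotone_opp_related ipP G_mono.
exists z; apply: (maximally_monotone_related ipP M_max) => x v Mxv.
have := z_rel x (g *: v - b) (ex_intro2 _ _ v Mxv erefl).
have -> : - z - (g *: v - b) = g *: (g^-1 *: (b - z) - v).
  by rewrite scalerBr scalerA mulfV ?gt_eqF // scale1r opprB addrCA addrA.
by rewrite (ipZr ipP) pmulr_rge0.
Qed.

End Minty.

Section DissipativeBounded.
Variables (R : realType) (Y : completeNormedModType R) (ip : Y -> Y -> R).
Hypothesis ipP : is_inner_product ip.
Variable S : {linear Y -> Y}.
Hypothesis S_diss : forall h, ip (S h) h <= 0.

Let ipE := ipE ipP.

Lemma dissipative_cross_le x y :
  `|ip (S y) x| <= - ip (S y) y - ip (S x) x + `|S x| * `|y|.
Proof.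
have := S_diss (y + x); have := S_diss (y - x).
have := cauchy_schwarz ipP (S x) y.
rewrite linearB linearD !ipE !ler_norml => /andP[? ?] ? ?.
by apply/andP; split; lra.
Qed.

Lemma dissipative_bound_unit_ball :
  exists C, forall y, `|y| <= 1 -> `|S y| <= C * (1 - ip (S y) y).
Proof.
have q_ge0 y : 0 <= - ip (S y) y by rewrite oppr_ge0.
have den_gt0 y : 0 < 1 - ip (S y) y by rewrite (lt_le_trans ltr01) // lerDl.
pose f y x := ip (S y) x / (1 - ip (S y) y).
pose F := [set g : Y -> R | exists2 y, `|y| <= 1 & g = f y].
have F_bounded_linear g : F g -> bounded_fun_norm g /\ linear g.
  move=> [y _ ->]; split.
    move=> r; exists (`|S y| * r) => x xr.
    rewrite /f normrM normfV (gtr0_norm (den_gt0 y)) ler_pdivrMr //.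
    apply: le_trans (cauchy_schwarz ipP _ _) _.
    have r0 : 0 <= r := le_trans (normr_ge0 x) xr.
    by rewrite -mulrA ler_wpM2l // -[`|x|]mulr1 ler_pM // lerDl.
  by move=> a u v; rewrite /f !ipE mulrDl -mulrA.
have F_pointwise : pointwise_bounded F.
  move=> x; exists (1 - ip (S x) x + `|S x|) => _ [y y1 ->].
  rewrite /f normrM normfV (gtr0_norm (den_gt0 y)) ler_pdivrMr //.
  apply: le_trans (dissipative_cross_le x y) _.
  have := q_ge0 x; have := q_ge0 y; have := normr_ge0 (S x).
  have : `|S x| * `|y| <= `|S x| by rewrite ler_piMr.
  nra.
have [C FC] := Banach_Steinhauss F_bounded_linear F_pointwise 1.
exists C => y y1.
have /FC FCy : F (f y) by exists y.
have [Sy0|Sy_neq0] := eqVneq (S y) 0.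
  have C0 : 0 <= C by have := FCy 0; rewrite /f !ipE mul0r !normr0; apply.
  by apply: le_trans (mulr_ge0 C0 (ltW (den_gt0 y))); rewrite Sy0 normr0.
have nSy : 0 < `|S y| by rewrite normr_gt0.
have := FCy (`|S y|^-1 *: S y).
rewrite /f normrZ normfV normr_id mulVf ?gt_eqF // => /(_ (lexx 1)).
rewrite (ipZr ipP) (ipxx ipP) expr2 mulrA mulVf ?gt_eqF // mul1r.
by rewrite normrM normfV !gtr0_norm // ler_pdivrMr.
Qed.

Lemma dissipative_lipschitz : exists L, 0 < L /\ forall y, `|S y| <= L * `|y|.
Proof.
have [C SC] := dissipative_bound_unit_ball.
pose K := `|C| + 1.
have K_ge1 : 1 <= K by rewrite lerDr.
have K0 : 0 < K := lt_le_trans ltr01 K_ge1.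
have CK : C <= K by rewrite (le_trans (ler_norm C)) // lerDl.
exists (4 * K ^+ 2); split; first by rewrite mulr_gt0 // exprn_gt0.
move=> y; have [->|y_neq0] := eqVneq y 0; first by rewrite linear0 !normr0 mulr0.
have ny : 0 < `|y| by rewrite normr_gt0.
(* At scale s the bound is linear in s on the left and quadratic on the right;
   s = 1 / (2 K |y|) balances the two. *)
pose s := (2 * K * `|y|)^-1.
have s0 : 0 < s by rewrite invr_gt0 !mulr_gt0.
have sKy : s * K * `|y| = 2^-1 by rewrite /s; field; rewrite !gt_eqF.
have sy1 : s * `|y| <= 1.
  by rewrite -(ler_pM2l K0) mulrA [K * s]mulrC sKy mulr1; lra.
have := SC (s *: y); rewrite linearZZ !normrZ (gtr0_norm s0) (ipZl ipP) (ipZr ipP).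
move=> /(_ sy1) le_s.
have q_le : - ip (S y) y <= `|S y| * `|y|.
  by apply: le_trans (cauchy_schwarz ipP _ _); rewrite -normrN ler_norm.
have scaled_bound : s * `|S y| <= K * (1 + s * s * (`|S y| * `|y|)).
  have e0 : 1 - s * (s * ip (S y) y) = 1 + s * s * (- ip (S y) y) by ring.
  rewrite e0 in le_s.
  have ss0 : 0 <= s * s by rewrite mulr_ge0 // ltW.
  apply: (le_trans le_s); apply: le_trans (ler_wpM2r _ CK) _.
    by rewrite addr_ge0 // mulr_ge0 // oppr_ge0.
  by rewrite ler_wpM2l ?(ltW K0) // lerD2l ler_wpM2l.
have e1 : K * (s * s * (`|S y| * `|y|)) = 2^-1 * (s * `|S y|) by rewrite -sKy; ring.
have e2 : s * (4 * K ^+ 2 * `|y|) = 4 * K * 2^-1 by rewrite -sKy; ring.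
rewrite -(ler_pM2l s0) e2; move: scaled_bound; rewrite mulrDr mulr1 e1; lra.
Qed.

End DissipativeBounded.

Section StronglyDissipativeShift.
Variables (R : realType) (Y : normedModType R) (ip : Y -> Y -> R).
Hypothesis ipP : is_inner_product ip.
Variables (S : {linear Y -> Y}) (lambda L : R).
Hypothesis lambda_gt0 : 0 < lambda.
Hypothesis lambda_le : lambda <= L.
Hypothesis S_sdiss : forall h, ip (S h) h + lambda * `|h| ^+ 2 <= 0.
Hypothesis S_lip : forall h, `|S h| <= L * `|h|.

Lemma strongly_dissipative_shift_contraction h :
  `|h + (lambda / L ^+ 2) *: S h| <= (1 - (lambda / L) ^+ 2 / 2) * `|h|.
Proof.
have L0 : 0 < L := lt_le_trans lambda_gt0 lambda_le.
set k := lambda / L; set g := lambda / L ^+ 2.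
have k0 : 0 <= k by rewrite divr_ge0 // ltW.
have k1 : k <= 1 by rewrite ler_pdivrMr // mul1r.
have g0 : 0 <= g by rewrite divr_ge0 ?sqr_ge0 // ltW.
(* The square of the left side is at most (1 - k^2) |h|^2 <= ((1 - k^2 / 2) |h|)^2. *)
rewrite -(@ler_pXn2r _ 2) ?nnegrE ?mulr_ge0 //; last by nra.
rewrite exprMn -!(ipxx ipP) !(ipE ipP) (ipC ipP h (S h)) !(ipxx ipP).
have gl : g * lambda = k ^+ 2 by rewrite /g /k; field; rewrite gt_eqF.
have gL : g ^+ 2 * L ^+ 2 = k ^+ 2 by rewrite /g /k; field; rewrite gt_eqF.
have i1 : g * ip (S h) h <= - k ^+ 2 * `|h| ^+ 2.
  by rewrite -gl; have := ler_wpM2l g0 (S_sdiss h); rewrite mulr0 mulrDr; lra.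
have i2 : g * (g * `|S h| ^+ 2) <= k ^+ 2 * `|h| ^+ 2.
  rewrite mulrA -expr2 -gL -mulrA ler_wpM2l ?exprn_ge0 // -exprMn.
  by rewrite ler_pXn2r ?nnegrE ?mulr_ge0 ?(ltW L0).
have i3 : 1 - k ^+ 2 <= (1 - k ^+ 2 / 2) ^+ 2 by nra.
have := sqr_ge0 `|h|; nra.
Qed.

End StronglyDissipativeShift.

Section MaximalMonotonePerturbation.
Variables (R : realType) (Y : completeNormedModType R) (ip : Y -> Y -> R).
Hypothesis ipP : is_inner_product ip.
Variables (M : Y -> set Y) (S : Y -> Y) (lambda : R).
Hypothesis M_max : maximally_monotone ip M.
Hypothesis S_lin : linear S.
Hypothesis lambda_gt0 : 0 < lambda.
Hypothesis S_sdiss : forall h, ip (S h) h + lambda * `|h| ^+ 2 <= 0.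

HB.instance Definition _ := GRing.isLinear.Build R Y Y *:%R S S_lin.

Lemma maximally_monotone_strongly_dissipative_zero : exists x, M x (S x).
Proof.
have S_diss h : ip (S h) h <= 0.
  by have := S_sdiss h; have := mulr_ge0 (ltW lambda_gt0) (sqr_ge0 `|h|); lra.
have [L0 [L0_gt0 SL0]] := dissipative_lipschitz ipP S_diss.
pose L := L0 + lambda; pose g := lambda / L ^+ 2; pose q := 1 - (lambda / L) ^+ 2 / 2.
have L_ge : lambda <= L by rewrite lerDr ltW.
have L_gt0 : 0 < L := lt_le_trans lambda_gt0 L_ge.
have SL h : `|S h| <= L * `|h|.
  by apply: le_trans (SL0 h) _; rewrite ler_wpM2r // lerDl ltW.
have g0 : 0 < g by rewrite divr_gt0 // exprn_gt0.
have /choice[J JM] b : exists z, M z (g^-1 *: (b - z)) := resolvent_exists ipP M_max b g0.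
pose F x := J (x + g *: S x).
have k0 : 0 < lambda / L by rewrite divr_gt0.
have k1 : lambda / L <= 1 by rewrite ler_pdivrMr ?mul1r.
have q0 : 0 <= q by rewrite /q; nra.
have q1 : q < 1 by rewrite /q; nra.
have F_contraction : is_contraction (totalfun_ [set: Y] F).
  exists (NngNum q0); split => // -[x1 x2] _ /=.
  apply: le_trans (resolvent_nonexpansive ipP M_max.1 g0 (JM _) (JM _)) _.
  rewrite opprD addrACA -scalerBr -linearB.
  exact: (strongly_dissipative_shift_contraction ipP lambda_gt0 L_ge S_sdiss SL).
have [x _ Fx] := banach_fixed_point F_contraction closedT (ex_intro _ 0 I).
have {}Fx : J (x + g *: S x) = x by exact: esym Fx.
exists x; have := JM (x + g *: S x); rewrite Fx.
by rewrite addrAC subrr add0r scalerA mulVf ?gt_eqF // scale1r.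
Qed.

End MaximalMonotonePerturbation.

Section Uniqueness.
Variables (R : realType) (Y : normedModType R) (ip : Y -> Y -> R).
Hypothesis ipP : is_inner_product ip.
Variables (T : Y -> Y) (lambda : R) (M : Y -> set Y).
Hypothesis T_lin : linear T.
Hypothesis T_inj : injective T.
Hypothesis lambda_gt0 : 0 < lambda.
Hypothesis T_diss : forall x, ip x (T x) + lambda * `|T x| ^+ 2 <= 0.
Hypothesis M_mono : monotone_mf ip M.

HB.instance Definition _ := GRing.isLinear.Build R Y Y *:%R T T_lin.

Lemma monotone_comp_fixed_point_unique y1 y2 : M (T y1) y1 -> M (T y2) y2 -> y1 = y2.
Proof.
move=> M1 M2; have := M_mono M1 M2; rewrite -linearB (ipC ipP).
have := T_diss (y1 - y2); set h := y1 - y2 => diss mono.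
have : lambda * `|T h| ^+ 2 <= 0 by lra.
rewrite pmulr_rle0 // => Th_le0.
have /eqP : `|T h| ^+ 2 = 0 by apply/eqP; rewrite eq_le Th_le0 sqr_ge0.
rewrite sqrf_eq0 normr_eq0 -(linear0 T) => /eqP/T_inj/eqP.
by rewrite subr_eq0 => /eqP.
Qed.

End Uniqueness.

Theorem lemma2p9 (R : realType) (Y : completeNormedModType R)
  (ip : Y -> Y -> R) (T : Y -> Y) (lambda : R) :
  is_inner_product ip ->
  bounded_linear T ->
  bijective T ->
  0 < lambda ->
  (forall x : Y, ip x (T x) + lambda * `|T x| ^+ 2 <= 0) ->
  forall M : Y -> set Y, maximally_monotone ip M ->
    exists! y : Y, M (T y) y.
Proof.
move=> ipP [T_lin _] [S TS ST] lambda_gt0 T_diss M M_max.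
have S_lin : linear S by move=> a x y; apply: (can_inj TS); rewrite T_lin !ST.
have S_sdiss h : ip (S h) h + lambda * `|h| ^+ 2 <= 0 by have := T_diss (S h); rewrite ST.
have [x Mx] := maximally_monotone_strongly_dissipative_zero ipP M_max S_lin lambda_gt0 S_sdiss.
exists (S x); split; first by rewrite ST.
move=> y My.
apply: (monotone_comp_fixed_point_unique ipP T_lin (can_inj TS) lambda_gt0 T_diss M_max.1) => //.
by rewrite ST.
Qed.
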